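(* Let $m,n,k$ be positive integers with $(m,k-1)=1$ and $n=\mathrm{ind}_m(k)$, let $G=G(m,n,k)=\langle a,b;\ a^m=1,\ b^n=1,\ b^{-1}ab=a^k\rangle$, let $S\subseteq\mathbb{Z}_m$ be a base, and suppose $\Sigma_G(S)$ is complete. Then $\Sigma_G(S)=\dot{\bigcup}_{x\in S^*}C(x,1)$ (a disjoint union) and $|\Sigma_G(S)|=m\,|S^*|$.
   Context: $\mathrm{ind}_m(k)$ is the least positive integer $d$ with $k^d\equiv 1\pmod m$. Every element of $G$ is written uniquely as $a^ib^j$ with $i\in\mathbb{Z}_m$, $j\in\mathbb{Z}_n$. For $t\ge 0$ let $k_t=k^t-1 \pmod m$. Maps are written on the right, and $\mu\circ\nu$ means ''first $\mu$, then $\nu$''. For $x,y\in\mathbb{Z}_m$ the mu-map $\mu(x,y):G\to G$ is $(a^ib^j)\mu(x,y)=a^{xik^j-yk_j}$. The container is $C(x,y)=\{\mu(x,yz): z\in\mathbb{Z}_m\}$. For $S\subseteq\mathbb{Z}_m$, $I(S)$ is the set of elements of $S$ invertible in $\mathbb{Z}_m$, and $S^*$ is the multiplicative subsemigroup of $\mathbb{Z}_m$ generated by $S$. A base is $S\subseteq\mathbb{Z}_m$ with $0\in S$ and $I(S)\neq\varnothing$. $\Sigma_G(S)$ is the semigroup under composition generated by $\{\mu(s,z): s\in S, z\in\mathbb{Z}_m\}$. For $x\in S^*$, $Y(x)=\{s^*z:\ s^*\in S^*, z\in\mathbb{Z}_m, \exists s\in S \text{ with } x\equiv ss^* \pmod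 m\}$ and the $x$-family is $\mathcal{F}_G(x,S)=\{C(x,y): y\in Y(x)\}$. The $x$-family is complete if $C(x,1)\in\mathcal{F}_G(x,S)$, and $\Sigma_G(S)$ is complete if the $x$-family is complete for every $x\in S^*$. *)

From HB Require Import structures.
From mathcomp Require Import all_boot all_algebra.
From mathcomp Require Import boolp.
Unset Printing Implicit Defensive.

(* Z_m, for m > 0, represented as ordinals below m.-1.+1 (= m when m > 0). *)
Definition Zm (m : nat) : finType := 'I_(m.-1).+1.

(* Elements a^i b^j of G(m,n,k) in normal form: pairs (i, j), i in Z_m, j in Z_n. *)
Definition Grp (m n : nat) : finType := (Zm m * Zm n)%type.

Definition zmul (m : nat) (x y : Zm m) : Zm m := inZp (x * y).

Definition is_ind (m k n : nat) : Prop :=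
  0 < n /\ k ^ n = 1 %[mod m] /\ (forall d, 0 < d -> k ^ d = 1 %[mod m] -> n <= d).

Definition kt (m k t : nat) : nat := (k ^ t - 1) %% m.

Definition mu (m n k : nat) (x y : Zm m) : {ffun Grp m n -> Grp m n} :=
  [ffun g : Grp m n =>
     (inZp (absz ((((x : nat) * (g.1 : nat) * k ^ (g.2 : nat))%:Z
                   - ((y : nat) * kt m k g.2)%:Z) %% (m%:Z))%Z) : Zm m,
      (inZp 0 : Zm n))].

(* composition "first f, then g" (maps written on the right) *)
Definition mcomp {T : finType} (f g : {ffun T -> T}) : {ffun T -> T} :=
  [ffun t => g (f t)].

Definition C (m n k : nat) (x y : Zm m) : {set {ffun Grp m n -> Grp m n}} :=
  [set mu m n k x (zmul m y z) | z : Zm m].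

Inductive in_Sigma (m n k : nat) (S : {set Zm m}) : {ffun Grp m n -> Grp m n} -> Prop :=
| Sigma_gen : forall s z, s \in S -> in_Sigma m n k S (mu m n k s z)
| Sigma_comp : forall f g, in_Sigma m n k S f -> in_Sigma m n k S g ->
                 in_Sigma m n k S (mcomp f g).

Definition Sigma (m n k : nat) (S : {set Zm m}) : {set {ffun Grp m n -> Grp m n}} :=
  [set f | `[< in_Sigma m n k S f >] ].

Inductive in_Sstar (m : nat) (S : {set Zm m}) : Zm m -> Prop :=
| Sstar_gen : forall s, s \in S -> in_Sstar m S s
| Sstar_mul : forall u v, in_Sstar m S u -> in_Sstar m S v -> in_Sstar m S (zmul m u v).

Definition Sstar (m : nat) (S : {set Zm m}) : {set Zm m} :=
  [set u | `[< in_Sstar m S u >] ].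

Definition IS (m : nat) (S : {set Zm m}) : {set Zm m} :=
  [set s in S | coprime s m].

Definition is_base (m : nat) (S : {set Zm m}) : Prop :=
  (inZp 0 : Zm m) \in S /\ IS m S != set0.

Definition Y (m : nat) (S : {set Zm m}) (x : Zm m) : {set Zm m} :=
  [set w | [exists sst in Sstar m S, exists z : Zm m,
              (w == zmul m sst z) && [exists s in S, x == zmul m s sst]]].

Definition family (m n k : nat) (S : {set Zm m}) (x : Zm m)
  : {set {set {ffun Grp m n -> Grp m n}}} :=
  [set C m n k x y | y in Y m S x].

Definition family_complete (m n k : nat) (S : {set Zm m}) (x : Zm m) : Prop :=
  C m n k x (inZp 1) \in family m n k S x.

Definition Sigma_complete (m n k : nat) (S : {set Zm m}) : Prop :=
  forall x, x \in Sstar m S -> family_complete m n k S x.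

From HB Require Import structures.
From mathcomp Require Import all_boot all_algebra.
From mathcomp Require Import boolp zify ring.
Import GRing.Theory.

(* Applying mu(x, y) and then mu(x', y') gives mu(x'x, x'y): the second map contributes only
   its multiplier. Hence every element of Sigma_G(S) is some mu(x, z) with x in S^*, and
   completeness supplies all of them: if C(x, 1) = C(x, s^* z0) with x = s s^*, then each
   mu(x, z) equals mu(s, w) followed by mu(s^*, t), for suitable w and any t such that
   mu(s^*, t) lies in Sigma_G(S). Evaluating mu(x, z) at a and at b recovers x and -z(k - 1),
   and k - 1 is a unit modulo m (and n >= 2 once m >= 2), so (x, z) |-> mu(x, z) is
   injective: the containers C(x, 1) = {mu(x, z)} are pairwise disjoint and of size m. *)

Definition inZm (m : nat) (A : int) : Zm m := inZp `|(A %% m%:Z)%Z|.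

Lemma zmulE (m : nat) (u v : Zm m) : zmul m u v = Zp_mul u v.
Proof. exact: val_inj. Qed.

Lemma zmulC (m : nat) : commutative (zmul m).
Proof. by move=> u v; rewrite !zmulE Zp_mulC. Qed.

Lemma zmulA (m : nat) : associative (zmul m).
Proof. by move=> u v w; rewrite !zmulE Zp_mulA. Qed.

Lemma zmul1 (m : nat) : left_id (inZp 1) (zmul m).
Proof. by move=> u; rewrite zmulE Zp_mul1z. Qed.

Lemma modz_scale_linear (d c a b i K t : int) :
  (c * ((a * i * K - b * t) %% d)%Z
   = (c * a %% d)%Z * i * K - (c * b %% d)%Z * t %[mod d])%Z.
Proof.
have mod_sub u : (d %| ((u %% d)%Z - u)%R)%Z by rewrite -eqz_mod_dvd modz_mod.
apply/eqP; rewrite eqz_mod_dvd.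
set A := (a * i * K - b * t)%R.
have -> : (c * (A %% d)%Z - ((c * a %% d)%Z * i * K - (c * b %% d)%Z * t)
          = c * ((A %% d)%Z - A) - ((c * a %% d)%Z - c * a) * i * K
            + ((c * b %% d)%Z - c * b) * t)%R.
  by rewrite /A; ring.
rewrite rpredD ?rpredB //.
- exact/dvdz_mull/mod_sub.
- exact/dvdz_mulr/dvdz_mulr/mod_sub.
- exact/dvdz_mulr/mod_sub.
Qed.

Lemma ind_gt1 {m k n : nat} : 1 < m -> 0 < k -> coprime m k.-1 -> is_ind m k n -> 1 < n.
Proof.
move=> m_gt1 k_gt0 co_m [n_gt0 [kn1 _]].
case: n n_gt0 kn1 => [|[|n]] // _; rewrite expn1 => /eqP.
rewrite eqn_mod_dvd // subn1 => /coprime_dvdr/(_ co_m).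
by rewrite /coprime gcdnn => /eqP m1; rewrite m1 in m_gt1.
Qed.

Section MuMaps.

Context {m n k : nat} (m_gt0 : 0 < m).

Lemma val_inZp a : val (inZp a : Zm m) = a %% m.
Proof. by rewrite /= prednK. Qed.

Lemma val_inZm A : (val (inZm m A) = (A %% m)%Z :> int)%R.
Proof.
have mod_ge0 : (0 <= (A %% m)%Z)%R by rewrite modz_ge0 // -lt0n.
rewrite val_inZp modn_small; first by rewrite gez0_abs.
by rewrite -ltz_nat gez0_abs // ltz_pmod.
Qed.

Lemma eq_inZm A B : inZm m A = inZm m B <-> (A = B %[mod m])%Z.
Proof.
split=> eqAB; last by rewrite /inZm eqAB.
by rewrite -!val_inZm eqAB.
Qed.

Lemma inZm_nat (x : Zm m) : inZm m (x : nat) = x.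
Proof.
apply: val_inj; apply/eqP; rewrite -eqz_nat val_inZm modz_nat modn_small //.
by rewrite -[X in _ < X]prednK.
Qed.

Lemma muE x y (g : Grp m n) :
  mu m n k x y g = (inZm m ((x * g.1 * k ^ g.2)%:Z - (y * kt m k g.2)%:Z)%R, inZp 0).
Proof. by rewrite ffunE. Qed.

Lemma val_zmul (u v : Zm m) : val (zmul m u v) = (u * v) %% m.
Proof. exact: val_inZp. Qed.

Lemma kt0 : kt m k 0 = 0.
Proof. by rewrite /kt expn0 subnn mod0n. Qed.

Lemma mu_comp x y x' y' :
  mcomp (mu m n k x y) (mu m n k x' y') = mu m n k (zmul m x' x) (zmul m x' y).
Proof.
apply/ffunP => -[i j]; rewrite ffunE !muE !val_zmul /=; congr (_, _).
rewrite mod0n expn0 kt0 muln0 muln1 subr0; apply/eq_inZm.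
by rewrite PoszM val_inZm !PoszM -!modz_nat !PoszM modz_scale_linear.
Qed.

Lemma C1E x : C m n k x (inZp 1) = mu m n k x @: [set: Zm m].
Proof. by apply/setP => f; apply/imsetP/imsetP => -[z _ ->]; exists z; rewrite ?zmul1. Qed.

Lemma mu_at_a x y : (mu m n k x y (inZp 1, inZp 0)).1 = x.
Proof.
rewrite muE -[RHS]inZm_nat /= mod0n kt0 expn0 muln0 muln1 subr0.
have -> : 1 %% m.-1.+1 = 1 %% m by rewrite prednK.
by apply/eq_inZm; rewrite PoszM -modz_nat modzMmr mulr1.
Qed.

Lemma mu_at_b x y : 1 < n ->
  (mu m n k x y (inZp 0, inZp 1)).1 = inZm m (- (y * kt m k 1)%:Z)%R.
Proof.
move=> n_gt1; have one_mod : 1 %% n.-1.+1 = 1 by rewrite prednK ?modn_small // ltnW.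
by rewrite muE /= one_mod mod0n muln0 !mul0n sub0r.
Qed.

Lemma Zm_mulr_cancel (c : nat) (y y' : Zm m) :
  coprime m c -> (m %| ((y * c)%:Z - (y' * c)%:Z)%R)%Z -> y = y'.
Proof.
move=> co_mc; rewrite !PoszM -mulrBl Gauss_dvdzl // => dvd_m.
by rewrite -[y]inZm_nat -[y']inZm_nat; apply/eq_inZm/eqP; rewrite eqz_mod_dvd.
Qed.

Lemma mu_inj (k_gt0 : 0 < k) (co_m : coprime m k.-1) (ind : is_ind m k n) x y x' y' :
  mu m n k x y = mu m n k x' y' -> x = x' /\ y = y'.
Proof.
move=> eq_mu.
have [m_le1 | m_gt1] := leqP m 1.
  have Zm1 (u : Zm m) : u = 0 :> nat by have := ltn_ord u; lia.
  by split; apply: ord_inj; rewrite !Zm1.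
split; first by rewrite -(mu_at_a x y) -(mu_at_a x' y') eq_mu.
have n_gt1 := ind_gt1 m_gt1 k_gt0 co_m ind.
apply/esym/(@Zm_mulr_cancel (kt m k 1)); first by rewrite coprime_modr expn1 subn1.
have := congr1 (fun f : {ffun Grp m n -> Grp m n} => (f (inZp 0, inZp 1)).1) eq_mu.
by rewrite !mu_at_b // => /eq_inZm/eqP; rewrite eqz_mod_dvd opprK addrC.
Qed.

Context {S : {set Zm m}}.

Lemma in_Sigma_mu f :
  in_Sigma m n k S f -> exists2 x, in_Sstar m S x & exists z, f = mu m n k x z.
Proof.
elim=> {f} [s z Ss | _ _ _ [x Sx [z ->]] _ [x' Sx' [z' ->]]].
  by exists s; [apply: Sstar_gen | exists z].
exists (zmul m x' x); first by rewrite zmulC; apply: Sstar_mul.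
by exists (zmul m x' z); rewrite mu_comp.
Qed.

Lemma in_Sstar_Sigma u : in_Sstar m S u -> exists t, in_Sigma m n k S (mu m n k u t).
Proof.
elim=> {u} [s Ss | u v _ [t Sigma_ut] _ [t' Sigma_vt']]; first by exists s; apply: Sigma_gen.
by exists (zmul m v t); rewrite zmulC -(mu_comp _ _ _ t'); apply: Sigma_comp.
Qed.

Lemma in_Sigma_complete x z :
  Sigma_complete m n k S -> in_Sstar m S x -> in_Sigma m n k S (mu m n k x z).
Proof.
move=> complete Sx.
have /imsetP [y] : family_complete m n k S x by apply: complete; rewrite inE; apply/asboolP.
rewrite inE => /exists_inP [t /[!inE] /asboolP St /existsP [z0]].
case/andP=> /eqP -> /exists_inP [s Ss /eqP x_st] C1_eq.
have : mu m n k x z \in C m n k x (inZp 1) by rewrite C1E; apply: imset_f.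
rewrite C1_eq => /imsetP [z1 _ ->].
have [t' Sigma_tt'] := in_Sstar_Sigma _ St.
rewrite x_st -zmulA zmulC -(mu_comp s _ t t').
by apply: Sigma_comp => //; apply: Sigma_gen.
Qed.

Lemma SigmaE :
  Sigma_complete m n k S -> Sigma m n k S = mu m n k @2: (Sstar m S, [set: Zm m]).
Proof.
move=> complete; apply/setP => f; rewrite inE; apply/asboolP/imset2P.
  by case/in_Sigma_mu=> x Sx [z ->]; exists x z; rewrite ?inE //; apply/asboolP.
by case=> x z /[!inE] /asboolP Sx _ ->; apply: in_Sigma_complete.
Qed.

End MuMaps.

Theorem theorem4p8 (m n k : nat) (S : {set Zm m}) :
  0 < m -> 0 < k -> coprime m k.-1 -> is_ind m k n ->
  is_base m S -> Sigma_complete m n k S ->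
  Sigma m n k S = \bigcup_(x in Sstar m S) C m n k x (inZp 1)
  /\ (forall x y, x \in Sstar m S -> y \in Sstar m S -> x != y ->
        [disjoint C m n k x (inZp 1) & C m n k y (inZp 1)])
  /\ #|Sigma m n k S| = m * #|Sstar m S|.
Proof.
move=> m_gt0 k_gt0 co_m ind _ complete.
have mu_injP := mu_inj m_gt0 k_gt0 co_m ind.
have Sigma_eq := SigmaE m_gt0 complete.
split; first by rewrite Sigma_eq curry_imset2l; apply: eq_bigr => x _; rewrite C1E.
split.
  move=> x y _ _; rewrite !C1E; apply: contraNT => /pred0Pn [f /andP [/imsetP [z _ ->]]].
  by case/imsetP=> z' _ /mu_injP [->].
rewrite Sigma_eq curry_imset2X card_imset ?cardsX ?cardsT ?card_ord ?prednK 1?mulnC //.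
by move=> [x z] [x' z'] /mu_injP [-> ->].
Qed.
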